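(* Let $\omega$ be a closed self-dual 2-form on a neighborhood $N(C)\cong C\times D^3$ of a circle $C$ in an oriented Riemannian 4-manifold, with coordinates $(\theta,x_1,x_2,x_3)$ ($\theta\in C=\mathbb{R}/2\pi\mathbb{Z}$, $x\in D^3$) such that $d\theta,dx_1,dx_2,dx_3$ are orthonormal at each point $(\theta,0)$, and suppose $\omega$ vanishes on $C=C\times\{0\}$ and has the form $$\omega=L_1(\theta,x)(d\theta\, dx_1+dx_2\, dx_3)+L_2(\theta,x)(d\theta\, dx_2+dx_3\, dx_1)+L_3(\theta,x)(d\theta\, dx_3+dx_1\, dx_2)+Q,$$ where $L_i(\theta,x)=\sum_{j=1}^3L_{ij}(\theta)x_j$ and $Q$ is a 2-form whose coefficients are of order at least two in the $x_i$. Then for every $\theta$ the matrix $(L_{ij}(\theta))$ is symmetric and traceless. *)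

(* Coordinates on R x R^3 : index 0 = theta, 1,2,3 = x_1,x_2,x_3. *)
From HB Require Import structures.
From mathcomp Require Import all_boot all_order all_algebra.
From mathcomp Require Import all_classical all_reals all_analysis.
Set Implicit Arguments. Unset Strict Implicit. Unset Printing Implicit Defensive.
Import Order.TTheory GRing.Theory Num.Theory.
Import numFieldNormedType.Exports.
Local Open Scope ring_scope.

Section Defs.
Variable R : realType.

Definition pt := 'rV[R]_4.

(* index of theta and of x_j (j : 'I_3 stands for x_{j+1}) *)
Definition ith : 'I_4 := ord0.
Definition ix (j : 'I_3) : 'I_4 := lift ord0 j.

Definition ev (a : 'I_4) : pt := delta_mx 0 a.

(* the chart domain C x D^3 (theta in R, with 2pi-periodicity imposed on the data) *)
Definition inN (p : pt) : Prop := \sum_(j < 3) p 0 (ix j) ^+ 2 < 1.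

Definition onC (t : R) : pt := t *: ev ith.

Definition partial (a : 'I_4) (f : pt -> R) (p : pt) : R := derive f p (ev a).

(* a 2-form is given by its antisymmetric coefficient matrix omega_{ab},
   omega = 1/2 sum_{a,b} omega_{ab} dx^a dx^b = sum_{a<b} omega_{ab} dx^a dx^b *)
Definition coef (W : pt -> 'M[R]_4) (a b : 'I_4) : pt -> R := fun p => W p a b.

Definition is_2form (W : pt -> 'M[R]_4) : Prop :=
  forall p, (W p)^T = - W p.

Definition closed_form (W : pt -> 'M[R]_4) : Prop :=
  (forall p a b, inN p -> differentiable (coef W a b) p) /\
  forall p a b c, inN p ->
    partial a (coef W b c) p + partial b (coef W c a) p
      + partial c (coef W a b) p = 0.

(* Levi-Civita symbol eps_{abcd}, orientation d theta dx1 dx2 dx3 *)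
Definition levi (a b c d : 'I_4) : R :=
  \det (\matrix_(i < 4, j < 4) ((tnth [tuple a; b; c; d] i == j)%:R : R)).

Definition riem_metric (G : pt -> 'M[R]_4) : Prop :=
  (forall p a b, inN p -> differentiable (fun q => G q a b) p) /\
  (forall p, inN p -> (G p)^T = G p) /\
  (forall p (v : 'rV[R]_4), inN p -> v != 0 -> 0 < (v *m G p *m v^T) 0 0).

(* Hodge star of a 2-form:
   ( *w)_{cd} = 1/2 sqrt(det g) eps_{abcd} g^{ae} g^{bf} w_{ef} *)
Definition hodge (G W : 'M[R]_4) : 'M[R]_4 :=
  let Wup := invmx G *m W *m invmx G in
  \matrix_(c < 4, d < 4)
    (Num.sqrt (\det G) / 2 * \sum_(a < 4) \sum_(b < 4) levi a b c d * Wup a b).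

Definition self_dual (G W : pt -> 'M[R]_4) : Prop :=
  forall p, inN p -> hodge (G p) (W p) = W p.

Definition theta_periodic (T : Type) (F : pt -> T) : Prop :=
  forall p, F (p + (2 * pi) *: ev ith) = F p.

(* the self-dual basic forms  d theta dx_i + dx_j dx_k  ((i,j,k) cyclic) *)
Definition dm (a b : nat) : 'M[R]_4 := delta_mx (inord a) (inord b).
Definition beta (i : 'I_3) : 'M[R]_4 :=
  match val i with
  | 0 => dm 0 1 - dm 1 0 + dm 2 3 - dm 3 2
  | 1 => dm 0 2 - dm 2 0 + dm 3 1 - dm 1 3
  | _ => dm 0 3 - dm 3 0 + dm 1 2 - dm 2 1
  end.

Definition Lfun (L : 'I_3 -> 'I_3 -> R -> R) (i : 'I_3) (p : pt) : R :=
  \sum_(j < 3) L i j (p 0 ith) * p 0 (ix j).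

Definition linpart (L : 'I_3 -> 'I_3 -> R -> R) (p : pt) : 'M[R]_4 :=
  \sum_(i < 3) Lfun L i p *: beta i.

(* a scalar function is of order at least two in x along C:
   it vanishes on C together with its first x-derivatives *)
Definition order_ge2 (f : pt -> R) : Prop :=
  forall t, f (onC t) = 0 /\ forall j : 'I_3, partial (ix j) f (onC t) = 0.

End Defs.

(* Along C the form vanishes, so its theta-derivatives
   vanish there, while its x_j-derivatives are read off the linear part:
   d_j omega_{bc} = sum_i L_ij beta_i(b, c).  The components (theta, x_j, x_k)
   of d omega = 0 then give L_kj - L_jk = 0, and the component (x_1, x_2, x_3)
   gives L_11 + L_22 + L_33 = 0. *)
From Pilot Require Import Defs.
From HB Require Import structures.
From mathcomp Require Import all_boot all_order all_algebra.
From mathcomp Require Import all_classical all_reals all_analysis.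
From mathcomp Require Import lra.
Import Order.TTheory GRing.Theory Num.Theory.
Import numFieldNormedType.Exports.
Local Open Scope ring_scope.

Section AffineLine.
Context {R : realType} {V W : normedModType R}.

Lemma derive_affine_line (f : V -> W) (a v : V) (c : W) :
  (forall h : R, f (h *: v + a) = f a + h *: c) ->
  derivable f a v /\ derive f a v = c.
Proof.
move=> f_affine.
have quotient_cst : \forall h \near dnbhs (0 : R),
    h^-1 *: ((f \o shift a) (h *: v) - f a) = c.
  near=> h.
  have h_neq0 : h != 0 by near: h; exact: nbhs_dnbhs_neq.
  by rewrite /= /shift /= f_affine addrC addKr scalerA mulVf // scale1r.
split; first exact: (is_cvg_near_cst c).
exact: (lim_near_cst _ quotient_cst).
Unshelve. all: by end_near. Qed.

End AffineLine.

Section Chart.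
Context {R : realType}.
Implicit Types (t h : R) (i j k : 'I_3).

Lemma onC_shift_x_theta t h j : (h *: ev R (ix j) + onC t) 0 ith = t.
Proof. by rewrite /onC /ev !mxE /ith /ix eqxx /= mulr0 mulr1 add0r. Qed.

Lemma onC_shift_x_coord t h j k :
  (h *: ev R (ix j) + onC t) 0 (ix k) = h * (k == j)%:R.
Proof. by rewrite /onC /ev !mxE /ith /ix eqxx /= (inj_eq lift_inj) mulr0 addr0. Qed.

Lemma inN_onC t : inN (onC t).
Proof.
rewrite /inN big1 ?ltr01 // => j _.
have := onC_shift_x_coord t 0 j j.
by rewrite scale0r add0r mul0r => ->; rewrite expr0n.
Qed.

Lemma sumr_delta (F : 'I_3 -> R) k : \sum_i F i * (i == k)%:R = F k.
Proof.
rewrite (bigD1 k) //= big1 ?addr0 ?eqxx ?mulr1 // => i /negbTE ->.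
by rewrite mulr0.
Qed.

Lemma linpart_shift_x (L : 'I_3 -> 'I_3 -> R -> R) t j b c h :
  linpart L (h *: ev R (ix j) + onC t) b c =
  linpart L (onC t) b c + h * \sum_i L i j t * beta R i b c.
Proof.
suff slope h' : linpart L (h' *: ev R (ix j) + onC t) b c =
                h' * \sum_i L i j t * beta R i b c.
  by rewrite slope -[onC t]add0r -(scale0r (ev R (ix j))) slope mul0r add0r.
rewrite /linpart summxE mulr_sumr; apply: eq_bigr => i _.
rewrite /Defs.Lfun mxE onC_shift_x_theta.
under eq_bigr do rewrite onC_shift_x_coord mulrCA.
by rewrite -mulr_sumr sumr_delta mulrA.
Qed.

Lemma eq_inord m (x : 'I_m.+1) n : (n < m.+1)%N -> (x == inord n) = (val x == n).
Proof. by move=> n_lt; rewrite -(inj_eq val_inj) /= inordK. Qed.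

Ltac beta_entry := rewrite /beta /dm /= !mxE !eq_inord //= ?inordK //= ?mulr0n ?mulr1n; lra.

Lemma beta_theta_x i j : beta R i ith (ix j) = (i == j)%:R.
Proof. by case: i => [[|[|[|i]]] ?] //; case: j => [[|[|[|j]]] ?] //; beta_entry. Qed.

Lemma beta_x_theta i j : beta R i (ix j) ith = - (i == j)%:R.
Proof. by case: i => [[|[|[|i]]] ?] //; case: j => [[|[|[|j]]] ?] //; beta_entry. Qed.

Lemma beta_x12 i : beta R i (ix (inord 1)) (ix (inord 2)) = (i == inord 0)%:R.
Proof. by case: i => [[|[|[|i]]] ?] //; beta_entry. Qed.

Lemma beta_x20 i : beta R i (ix (inord 2)) (ix (inord 0)) = (i == inord 1)%:R.
Proof. by case: i => [[|[|[|i]]] ?] //; beta_entry. Qed.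

Lemma beta_x01 i : beta R i (ix (inord 0)) (ix (inord 1)) = (i == inord 2)%:R.
Proof. by case: i => [[|[|[|i]]] ?] //; beta_entry. Qed.

End Chart.

Section LinearPartOfClosedForm.
Context {R : realType} {W : pt R -> 'M[R]_4} {L : 'I_3 -> 'I_3 -> R -> R}.
Hypothesis W_closed : closed_form W.
Hypothesis W_onC : forall t, W (onC t) = 0.
Hypothesis W_linpart :
  forall a b : 'I_4, order_ge2 (fun p => (W p - linpart L p) a b).
Variable t : R.

Lemma partial_theta_coef_onC b c : partial ith (coef W b c) (onC t) = 0.
Proof.
rewrite /partial; apply: (proj2 (derive_affine_line _ _ _ _ _)) => h.
by rewrite /coef /onC -scalerDl !W_onC mxE scaler0 addr0.
Qed.

Lemma partial_x_coef_onC j b c :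
  partial (ix j) (coef W b c) (onC t) = \sum_i L i j t * beta R i b c.
Proof.
have [lin_derivable lin_derive] :=
  derive_affine_line (fun p => linpart L p b c) (onC t) (ev R (ix j)) _
    (linpart_shift_x L t j b c).
have W_derivable := diff_derivable (v := ev R (ix j))
  (W_closed.1 (onC t) b c (inN_onC t)).
have := (W_linpart b c t).2 j; rewrite /partial.
have -> : (fun p => (W p - linpart L p) b c)
          = coef W b c - (fun p => linpart L p b c).
  by apply/funext => p; rewrite !mxE.
by rewrite deriveB // lin_derive => /eqP; rewrite subr_eq0 => /eqP.
Qed.

Lemma sum_L_beta {k : 'I_3} {a b : 'I_4} :
  (forall i, beta R i a b = (i == k)%:R) ->
  \sum_i L i k t * beta R i a b = L k k t.
Proof.
by move=> beta_ab; under eq_bigr do rewrite beta_ab; rewrite sumr_delta.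
Qed.

Lemma linpart_closed_sym j k : L j k t = L k j t.
Proof.
have := W_closed.2 (onC t) ith (ix j) (ix k) (inN_onC t).
rewrite partial_theta_coef_onC !partial_x_coef_onC add0r.
under eq_bigr do rewrite beta_x_theta mulrN.
under [X in _ + X]eq_bigr do rewrite beta_theta_x.
by rewrite sumrN !sumr_delta addrC => /eqP; rewrite subr_eq0 => /eqP.
Qed.

Lemma linpart_closed_trace : \tr (\matrix_(i < 3, j < 3) L i j t) = 0.
Proof.
have := W_closed.2 (onC t) (ix (inord 0)) (ix (inord 1)) (ix (inord 2)) (inN_onC t).
rewrite !partial_x_coef_onC (sum_L_beta beta_x12).
rewrite (sum_L_beta beta_x20) (sum_L_beta beta_x01) => <-.
rewrite /mxtrace !big_ord_recr big_ord0 /= add0r !mxE.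
by congr (L _ _ t + L _ _ t + L _ _ t); apply: val_inj; rewrite /= inordK.
Qed.

End LinearPartOfClosedForm.

Theorem mainTheorem3 (R : realType) (G W : pt R -> 'M[R]_4)
    (L : 'I_3 -> 'I_3 -> R -> R) :
  riem_metric G -> theta_periodic G ->
  (forall t, G (onC t) = 1%:M) ->
  is_2form W -> theta_periodic W -> closed_form W -> self_dual G W ->
  (forall t, W (onC t) = 0) ->
  (forall i j t, differentiable (L i j) t) ->
  (forall a b : 'I_4, order_ge2 (fun p => (W p - linpart L p) a b)) ->
  forall t : R, let M := \matrix_(i < 3, j < 3) L i j t in
    M^T = M /\ \tr M = 0.
Proof.
move=> _ _ _ _ _ W_closed _ W_onC _ W_linpart t M; split.
  apply/matrixP => j k; rewrite !mxE.
  exact: (linpart_closed_sym W_closed W_onC W_linpart).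
exact: (linpart_closed_trace W_closed W_linpart).
Qed.
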